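(* In every dynamic network congestion game, there exists a blind Nash equilibrium.
   Context: An arena is $\mathcal A=(V,E,\mathsf{src},\mathsf{tgt})$ with $V$ finite, $E$ a partial function from $V\times V$ to non-decreasing piecewise-affine functions $\mathbb N\to\mathbb N$ (edge $e$ has cost function $\ell_e$); $\mathsf{tgt}$ has only a self-loop of constant cost $0$ and is reachable from every state. A dynamic NCG $(\mathcal A,n)$ has players $[n]$ all starting in $\mathsf{src}$; in each step each player simultaneously picks an edge leaving their current state, moves along it and pays $\ell_e(u)$, $u$ being the number of players choosing that same edge $e$ in that step. Strategies map finite histories to edges; $\mathrm{cost}_i(\sigma)$ is player $i$'s total payment along the outcome of $\sigma$ until reaching $\mathsf{tgt}$ ($+\infty$ if never). A strategy is blind if it depends only on the sequence of states visited by the player itself (it follows a fixed path of $\mathcal A$). A blind Nash equilibrium is a profile $\sigma$ of blind strategies such that for all $k$, $\mathrm{cost}_k(\sigma)=\inf_{\sigma'_k\text{ blind}}\mathrm{cost}_k(\langle\sigma_{-k},\sigma'_k\rangle)$, where $\langle\sigma_{-k},\sigma'_k\rangle$ replaces $\sigma_k$ by $\sigma'_k$. *)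

From Stdlib Require Import ClassicalEpsilon.
From mathcomp Require Import all_boot all_order all_algebra.
Set Implicit Arguments. Unset Strict Implicit. Unset Printing Implicit Defensive.
Import Order.TTheory GRing.Theory Num.Theory.

(* f : N -> N is piecewise affine: finitely many breakpoints [bs]; on each
   piece (indexed by the number of breakpoints <= x, hence an interval of N)
   f is affine with rational coefficients a, b. *)
Definition piecewise_affine (f : nat -> nat) : Prop :=
  exists (bs : seq nat) (a b : nat -> rat),
    forall x : nat,
      ((f x)%:R = a (count (fun c => (c <= x)%N) bs) * x%:R
                  + b (count (fun c => (c <= x)%N) bs))%R.

(* Arena: states V (finite), partial edge map E u v = Some l_e when there is an
   edge e from u to v with cost function l_e. *)
Definition arena_ok (V : finType) (E : V -> V -> option (nat -> nat))
    (src tgt : V) : Prop :=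
  [/\ (forall u v f, E u v = Some f ->
         {homo f : x y / x <= y} /\ piecewise_affine f),
      (exists f, E tgt tgt = Some f /\ forall x, f x = 0),
      (forall v, v != tgt -> E tgt v = None) &
      (forall v, exists s : seq V,
          path (fun a b => isSome (E a b)) v s /\ last v s = tgt)].

Definition blind (V : finType) (E : V -> V -> option (nat -> nat))
    (src : V) (p : nat -> V) : Prop :=
  p 0 = src /\ forall t, isSome (E (p t) (p t.+1)).

(* Extended naturals: None = +oo. *)
Definition enat_le (a b : option nat) : bool :=
  match a, b with
  | _, None => true
  | None, Some _ => false
  | Some x, Some y => x <= y
  end.

Definition is_inf (S : option nat -> Prop) (x : option nat) : Prop :=
  (forall y, S y -> enat_le x y) /\
  (forall z, (forall y, S y -> enat_le z y) -> enat_le z x).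

Definition reach_time (V : finType) (tgt : V) (p : nat -> V) : option nat :=
  match excluded_middle_informative (exists t, p t == tgt) with
  | left H => Some (ex_minn H)
  | right _ => None
  end.

Definition load (V : finType) (n : nat) (P : 'I_n -> nat -> V)
    (i : 'I_n) (t : nat) : nat :=
  #|[pred j : 'I_n | (P j t == P i t) && (P j t.+1 == P i t.+1)]|.

Definition edge_cost (V : finType) (E : V -> V -> option (nat -> nat))
    (u v : V) (x : nat) : nat :=
  match E u v with Some f => f x | None => 0 end.

Definition cost (V : finType) (E : V -> V -> option (nat -> nat)) (tgt : V)
    (n : nat) (P : 'I_n -> nat -> V) (i : 'I_n) : option nat :=
  match reach_time tgt (P i) with
  | Some T => Some (\sum_(t < T) edge_cost E (P i t) (P i t.+1) (load P i t))
  | None => None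
  end.

Definition deviate (V : finType) (n : nat) (P : 'I_n -> nat -> V)
    (k : 'I_n) (p' : nat -> V) : 'I_n -> nat -> V :=
  fun j => if j == k then p' else P j.

Definition blind_NE (V : finType) (E : V -> V -> option (nat -> nat))
    (src tgt : V) (n : nat) (P : 'I_n -> nat -> V) : Prop :=
  (forall i, blind E src (P i)) /\
  forall k : 'I_n,
    is_inf (fun c => exists p', blind E src p' /\ c = cost E tgt (deviate P k p') k)
           (cost E tgt P k).

(* Rosenthal's potential argument, applied step by step.  At each step the
   potential sums over the edges e the quantity l_e(1) + ... + l_e(m_e), where
   m_e is the number of players crossing e; summing over time up to a horizon
   at which everybody sits in tgt (where all costs vanish) gives the total
   potential of a profile.  When a single player k changes its path, the part
   of the potential due to the other players is unchanged, so the potential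
   changes exactly as the cost of k does.  Hence a profile of paths that all
   reach tgt and minimises the (natural-number valued) potential among such
   profiles is a blind Nash equilibrium: a deviation reaching tgt cannot lower
   the cost of k, and a deviation never reaching tgt costs +oo.  Such profiles
   exist because tgt is reachable from src. *)
From mathcomp Require Import all_boot all_order all_algebra.
From Stdlib Require Import Classical ClassicalEpsilon FunctionalExtensionality.
Set Implicit Arguments. Unset Strict Implicit. Unset Printing Implicit Defensive.

Lemma ex_argmin (A : Type) (Q : A -> Prop) (f : A -> nat) :
  (exists a, Q a) -> exists2 a, Q a & forall b, Q b -> f a <= f b.
Proof.
case=> a Qa; move: {2}(f a) (erefl (f a)) => m.
elim/ltn_ind: m a Qa => m IH a Qa fa.
case: (classic (exists2 b, Q b & f b < f a)) => [[b Qb lt_ba] | no_less].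
  by apply: (IH (f b)) Qb erefl; rewrite -fa.
exists a => // b Qb; rewrite leqNgt; apply/negP => lt_ba.
by apply: no_less; exists b.
Qed.

Section BlindPotential.

Variables (V : finType) (E : V -> V -> option (nat -> nat)) (src tgt : V) (n : nat).
Implicit Types (P : 'I_n -> nat -> V) (p : nat -> V) (k : 'I_n).

Definition edge_count P t (e : V * V) :=
  #|[pred j | (P j t == e.1) && (P j t.+1 == e.2)]|.

Definition edge_count_others P k t (e : V * V) :=
  #|[pred j | (j != k) && ((P j t == e.1) && (P j t.+1 == e.2))]|.

Definition rosenthal (e : V * V) m := \sum_(x < m) edge_cost E e.1 e.2 x.+1.

Definition step_potential P t := \sum_(e : V * V) rosenthal e (edge_count P t e).

Definition others_potential P k t :=
  \sum_(e : V * V) rosenthal e (edge_count_others P k t e).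

Definition step_cost P k t := edge_cost E (P k t) (P k t.+1) (load P k t).

Definition potential P H := \sum_(0 <= t < H) step_potential P t.

Lemma edge_count_split P k t e :
  edge_count P t e = edge_count_others P k t e + ((P k t, P k t.+1) == e).
Proof. by rewrite /edge_count /edge_count_others (cardD1 k) addnC. Qed.

Lemma step_potential_split P k t :
  step_potential P t = others_potential P k t + step_cost P k t.
Proof.
set ek := (P k t, P k t.+1).
rewrite /step_potential /others_potential /step_cost (bigD1 ek) //= [in RHS](bigD1 ek) //=.
have -> : load P k t = edge_count P t ek by [].
rewrite (edge_count_split P k) eqxx addn1 /rosenthal big_ord_recr /=.
rewrite addnAC; congr (_ + _ + _); apply: eq_bigr => e ne_e.
by rewrite (edge_count_split P k) eq_sym (negbTE ne_e) addn0.
Qed.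

Lemma others_potential_deviate P k p' t :
  others_potential (deviate P k p') k t = others_potential P k t.
Proof.
apply: eq_bigr => e _; congr rosenthal; apply: eq_card => j.
by rewrite !inE /deviate; case: eqP.
Qed.

Lemma potential_split P k H :
  potential P H = \sum_(0 <= t < H) others_potential P k t
                  + \sum_(0 <= t < H) step_cost P k t.
Proof. by rewrite /potential -big_split; apply: eq_bigr => t _; apply: step_potential_split. Qed.

Lemma potential_deviate P k p' H :
  potential (deviate P k p') H + \sum_(0 <= t < H) step_cost P k t
  = potential P H + \sum_(0 <= t < H) step_cost (deviate P k p') k t.
Proof.
rewrite !(potential_split _ k).
under eq_bigr do rewrite others_potential_deviate.
by rewrite addnAC.
Qed.

Lemma deviate_id P k : deviate P k (P k) = P.
Proof. by apply: functional_extensionality => j; rewrite /deviate; case: eqP => // ->. Qed.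

Lemma cost_None_or_reached P k : cost E tgt P k = None \/ exists T, P k T = tgt.
Proof.
rewrite /cost /reach_time; case: excluded_middle_informative => [reached|_]; last by left.
by right; case: reached => T /eqP; exists T.
Qed.

Hypothesis arena : arena_ok E src tgt.

Lemma edge_cost_tgt x : edge_cost E tgt tgt x = 0.
Proof. by rewrite /edge_cost; case: arena => _ [f [-> f0]] _ _; rewrite f0. Qed.

Lemma blind_stays_tgt p t t' : blind E src p -> p t = tgt -> t <= t' -> p t' = tgt.
Proof.
have [_ _ tgt_no_exit _] := arena.
move=> [_ p_edge] pt /subnK <-; elim: (t' - t) => [|d IH] //=.
have := p_edge (d + t); rewrite addSn IH.
by case: (eqVneq (p (d + t).+1) tgt) => // /tgt_no_exit ->.
Qed.

Lemma step_potential_tgt P t :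
  (forall i, P i t = tgt) -> (forall i, P i t.+1 = tgt) -> step_potential P t = 0.
Proof.
move=> Pt Pt1; apply: big1 => [[u v]] _.
have [/andP[/eqP -> /eqP ->]|not_loop] := boolP ((u == tgt) && (v == tgt)).
  by apply: big1 => x _; apply: edge_cost_tgt.
rewrite /edge_count eq_card0; first by rewrite /rosenthal big_ord0.
by move=> j; rewrite !inE Pt Pt1 /= ![tgt == _]eq_sym; apply/negbTE.
Qed.

Lemma cost_reached P k H :
  blind E src (P k) -> P k H = tgt ->
  cost E tgt P k = Some (\sum_(0 <= t < H) step_cost P k t).
Proof.
move=> blind_k PkH; rewrite /cost /reach_time.
case: excluded_middle_informative => [reached|[]]; last by exists H; rewrite PkH.
case: ex_minnP => T /eqP PkT T_min; congr Some.
have le_TH : T <= H by apply: T_min; rewrite PkH.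
rewrite -(big_mkord xpredT (step_cost P k)) (big_cat_nat (leq0n T) le_TH) /=.
rewrite [X in _ = _ + X]big1_seq ?addn0 // => t; rewrite mem_index_iota => /and3P[_ le_Tt _].
by rewrite /step_cost (blind_stays_tgt blind_k PkT le_Tt)
  (blind_stays_tgt blind_k PkT (leqW le_Tt)) edge_cost_tgt.
Qed.

Definition settled P H := (forall i, blind E src (P i)) /\ (forall i, P i H = tgt).

Lemma potential_settled P H H' : settled P H -> H <= H' -> potential P H' = potential P H.
Proof.
move=> [blindP PH] le_HH'; rewrite /potential (big_cat_nat (leq0n H) le_HH') /=.
rewrite [X in _ + X]big1_seq ?addn0 // => t; rewrite mem_index_iota => /and3P[_ le_Ht _].
by apply: step_potential_tgt => i; apply: (blind_stays_tgt (blindP i) (PH i));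
  [exact: le_Ht | exact: leqW].
Qed.

Lemma settled_deviate P H k p' T :
  settled P H -> blind E src p' -> p' T = tgt -> settled (deviate P k p') (maxn H T).
Proof.
move=> [blindP PH] blind' p'T; split=> j; rewrite /deviate; case: eqP => // _.
- exact: blind_stays_tgt blind' p'T (leq_maxr _ _).
- exact: blind_stays_tgt (blindP j) (PH j) (leq_maxl _ _).
Qed.

Lemma exists_blind_reaching : exists p H, blind E src p /\ p H = tgt.
Proof.
have [_ [f [tgt_loop _]] _ reachable] := arena; have [s [s_path s_last]] := reachable src.
have p_end : nth tgt (src :: s) (size s) = tgt by rewrite -last_nth s_last.
exists (nth tgt (src :: s)), (size s); split=> //; split=> // t.
have [lt_ts | le_st] := ltnP t (size s).
  by move/pathP: s_path => /(_ tgt t lt_ts).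
rewrite [nth _ _ t.+1]nth_default /= ?ltnS //.
have [le_ts | lt_st] := leqP t (size s); last by rewrite nth_default /= ?tgt_loop.
have -> : t = size s by apply/eqP; rewrite eqn_leq le_ts le_st.
by rewrite p_end tgt_loop.
Qed.

Lemma potential_minimizer_blind_NE P H :
  settled P H -> (forall Q H', settled Q H' -> potential P H <= potential Q H') ->
  blind_NE E src tgt P.
Proof.
move=> setP minP; have [blindP PH] := setP; split=> // k; split.
- move=> _ [p' [blind' ->]].
  have [-> | [T]] := cost_None_or_reached (deviate P k p') k.
    by rewrite (cost_reached (blindP k) (PH k)).
  rewrite /deviate eqxx => p'T.
  have setQ := settled_deviate k setP blind' p'T.
  have le_H := leq_maxl H T.
  rewrite (cost_reached (setQ.1 k) (setQ.2 k)).
  rewrite (cost_reached (blindP k) (blind_stays_tgt (blindP k) (PH k) le_H)) /=.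
  have := potential_deviate P k p' (maxn H T).
  rewrite (potential_settled setP le_H) => exact_potential.
  by rewrite -(leq_add2l (potential (deviate P k p') (maxn H T))) exact_potential leq_add2r minP.
- move=> z lower_bound; rewrite -[X in cost _ _ X](deviate_id P k).
  by apply: lower_bound; exists (P k).
Qed.

End BlindPotential.

Theorem lemmaB1 (V : finType) (E : V -> V -> option (nat -> nat)) (src tgt : V)
    (n : nat) :
  arena_ok E src tgt ->
  exists P : 'I_n -> nat -> V, blind_NE E src tgt P.
Proof.
move=> arena; have [p [H [blind_p pH]]] := exists_blind_reaching arena.
have settled_exists : exists PH : ('I_n -> nat -> V) * nat, settled E src tgt PH.1 PH.2.
  by exists ((fun _ : 'I_n => p), H).
have [[P HP] setP minP] := ex_argmin (fun PH => potential E PH.1 PH.2) settled_exists.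
exists P; apply: (potential_minimizer_blind_NE arena setP) => Q HQ setQ.
exact: minP (Q, HQ) setQ.
Qed.
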